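(* In the setting and notation described in the context, assume the oracle is noiseless, i.e. $\mathcal{O}(x)=\nabla f(x)$ with probability 1 for all $x\in\mathcal{K}$, and suppose the step-size denominators satisfy $\Gamma^x_t\ge Q_{t-1}$ for all $t\ge 0$. Then there is an absolute constant $C>0$ such that for every $t\ge 0$ and every number $s\ge 0$, \[ f(\bar x_t)-f(x^\star)\le C\,\frac{s^{3/2}\beta(\bar r_{t+1}+d_0)^2+(\bar r_{t+1}+d_0)\left[\sqrt{\max\{\Gamma^y_t,Q_t\}}-s\sqrt{Q_t}\right]_+}{\left(\sum_{k=0}^t \bar r_k/\bar r_{t+1}\right)^2}. \]
   Context: Norms are Euclidean, $\Pi_{\mathcal K}$ is Euclidean projection onto $\mathcal K$, $[a]_+=\max\{a,0\}$. Standing assumptions: $\mathcal K\subseteq\mathbb{R}^n$ is closed and convex; $f:\mathcal K\to\mathbb R$ is convex, $G$-Lipschitz and $\beta$-smooth ($\nabla f$ is $\beta$-Lipschitz; $G$ or $\beta$ may be $+\infty$); $x^\star\in\arg\min_{x\in\mathcal K}f(x)$ exists; a stochastic gradient oracle $\mathcal O$ returns for each query $x\in\mathcal K$ a random vector with $\mathbb E\,\mathcal O(x)=\nabla f(x)$. UDoG template: given $x_0\in\mathcal K$, an iteration budget $T$, $r_\epsilon>0$ and step sizes $\eta_{x,t},\eta_{y,t}$, set $y_0=x_0$ and for $t=0,1,2,\dots$: let $\bar r_t=\max_{k\le t}\max\{\|y_k-x_0\|,\|x_k-x_0\|,r_\epsilon\}$, $\alpha_t=\sum_{k=0}^t\bar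 r_k/\bar r_t$, $w_t=\alpha_t\bar r_t$; let $\bar z_t=\frac{w_ty_t+\sum_{k=0}^{t-1}w_kx_{k+1}}{\sum_{k=0}^tw_k}$, $m_t\sim\mathcal O(\bar z_t)$, $x_{t+1}=\Pi_{\mathcal K}(y_t-\alpha_t\eta_{x,t}m_t)$; let $\bar x_t=\frac{\sum_{k=0}^tw_kx_{k+1}}{\sum_{k=0}^tw_k}$, $g_t\sim\mathcal O(\bar x_t)$, $y_{t+1}=\Pi_{\mathcal K}(y_t-\alpha_t\eta_{y,t}g_t)$. ($\bar r_{t+1}$ is given by the same formula once $x_{t+1},y_{t+1}$ are computed.) Step sizes have the form $\eta_{x,t}=\bar r_t/\sqrt{\Gamma^x_t}$, $\eta_{y,t}=\bar r_t/\sqrt{\Gamma^y_t}$ with $\Gamma^x_0\le\Gamma^y_0\le\Gamma^x_1\le\Gamma^y_1\le\cdots$ positive. Notation: $q_t=\alpha_t^2\|g_t-m_t\|^2$, $Q_t=\sum_{k=0}^tq_k$ (with $Q_{-1}=0$), $d_t=\|y_t-x^\star\|$ (so $d_0=\|x_0-x^\star\|$). *)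

From HB Require Import structures.
From mathcomp Require Import all_boot all_order all_algebra.
From mathcomp Require Import all_classical all_reals all_analysis.
Set Implicit Arguments. Unset Strict Implicit. Unset Printing Implicit Defensive.
Import Order.TTheory GRing.Theory Num.Theory numFieldNormedType.Exports.
Local Open Scope ring_scope.
Local Open Scope classical_set_scope.

Section UDoG.
Variables (R : realType) (n : nat).
Notation vec := 'rV[R]_n.

Definition dotv (u v : vec) : R := \sum_(i < n) u ord0 i * v ord0 i.
Definition enorm (u : vec) : R := Num.sqrt (dotv u u).

Definition convex_on (K : set vec) (f : vec -> R) : Prop :=
  forall x y, K x -> K y -> forall l : R, 0 <= l <= 1 ->
    f (l *: x + (1 - l) *: y) <= l * f x + (1 - l) * f y.

(* grad x is a (sub)gradient of f on K at x; for differentiable f this is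
   the gradient.  *)
Definition is_subgrad_on (K : set vec) (f : vec -> R) (grad : vec -> vec) :=
  forall x y, K x -> K y -> f x + dotv (grad x) (y - x) <= f y.

Definition smooth_on (K : set vec) (grad : vec -> vec) (beta : R) : Prop :=
  forall x y, K x -> K y -> enorm (grad x - grad y) <= beta * enorm (x - y).

Definition is_proj (K : set vec) (z p : vec) : Prop :=
  K p /\ forall q, K q -> enorm (z - p) <= enorm (z - q).

Definition is_minimizer (K : set vec) (f : vec -> R) (xs : vec) : Prop :=
  K xs /\ forall x, K x -> f xs <= f x.

Variables (x y : nat -> vec) (reps : R).

Definition rbar (t : nat) : R :=
  \big[Num.max/reps]_(k < t.+1)
     Num.max (enorm (y k - x 0%N)) (enorm (x k - x 0%N)).

Definition alpha (t : nat) : R := (\sum_(k < t.+1) rbar k) / rbar t.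
Definition wgt (t : nat) : R := alpha t * rbar t.

Definition zbar (t : nat) : vec :=
  (\sum_(k < t.+1) wgt k)^-1 *:
    (wgt t *: y t + \sum_(k < t) wgt k *: x k.+1).

Definition xbar (t : nat) : vec :=
  (\sum_(k < t.+1) wgt k)^-1 *: (\sum_(k < t.+1) wgt k *: x k.+1).

Variable grad : vec -> vec.

(* noiseless oracle: m_t = grad f(zbar_t), g_t = grad f(xbar_t) *)
Definition qq (t : nat) : R :=
  alpha t ^+ 2 * enorm (grad (xbar t) - grad (zbar t)) ^+ 2.

(* Qpre t = Q_{t-1} = sum_{k<t} q_k  (so Qpre 0 = Q_{-1} = 0, Q_t = Qpre t.+1) *)
Definition Qpre (t : nat) : R := \sum_(k < t) qq k.

End UDoG.

(* Write g_k = grad f (xbar_k), gamma = sqrt Gamma, r = rbar_{t+1} and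
   D = r + |x_0 - xstar|.  Anytime online-to-batch conversion bounds
   (sum_k w_k) (f (xbar_t) - f xstar) by the weighted linearized regret
   sum_k w_k <g_k, x_{k+1} - xstar>, and sum_k w_k >= (sum_k rbar_k)^2 / (2 r).
   The three-point inequalities of the two projections bound each regret term
   by a telescoping term gamma^y_k (d_k^2 - d_{k+1}^2) / 2, plus the optimism
   error rbar_k sqrt q_k |x_{k+1} - y_{k+1}|, minus the stability term
   gamma^x_k (|x_{k+1} - y_{k+1}|^2 + |x_{k+1} - y_k|^2) / 2.  Because
   Gamma^x_k >= Q_{k-1}, maximizing over |x_{k+1} - y_{k+1}| shows that each
   error is at most 6 r^2 (sqrt Q_k - sqrt Q_{k-1}), so the regret is
   O(r D sqrt (max Gamma^y_t Q_t)).  Under beta-smoothness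
   sqrt q_k <= 2 beta |x_{k+1} - y_k|, so once sqrt Q_{k-1} exceeds
   lambda ~ beta sqrt s D the stability term pays for the error: sqrt Q
   effectively saturates at lambda + 4 beta r, which gives the
   s^{3/2} beta D^2 term whenever sqrt (max Gamma^y_t Q_t) < 2 s sqrt Q_t. *)

From HB Require Import structures.
From mathcomp Require Import all_boot all_order all_algebra.
From mathcomp Require Import all_classical all_reals all_analysis.
From mathcomp Require Import ring lra.
Set Implicit Arguments. Unset Strict Implicit. Unset Printing Implicit Defensive.
Import Order.TTheory GRing.Theory Num.Theory numFieldNormedType.Exports.
Local Open Scope ring_scope.
Local Open Scope classical_set_scope.

Section ScalarInequalities.
Variable R : realFieldType.

Lemma ler_of_sqr (u v : R) : 0 <= v -> u ^+ 2 <= v ^+ 2 -> u <= v.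
Proof. by move=> v0 uv; rewrite leNgt; apply/negP => vu; nra. Qed.

Lemma telescope_sumr_ord (F : nat -> R) t :
  \sum_(k < t) (F k.+1 - F k) = F t - F 0%N.
Proof. by rewrite -(big_mkord xpredT (fun k => F k.+1 - F k)) telescope_sumr. Qed.

Lemma abel_telescope_le (c e : nat -> R) (B : R) t :
  (forall k, c k <= c k.+1) -> (forall k, 0 <= c k) ->
  (forall k, (k <= t.+1)%N -> e k <= B) ->
  \sum_(k < t.+1) c k * (e k - e k.+1) + c t * e t.+1 <= c t * B.
Proof.
move=> c_incr c_ge0; elim: t => [|t IH] e_le.
  by rewrite big_ord1 -mulrDr subrK ler_wpM2l ?e_le.
rewrite big_ord_recr /=.
have := IH (fun k kt => e_le k (leqW kt)).
have : (c t.+1 - c t) * e t.+1 <= (c t.+1 - c t) * B.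
  by rewrite ler_wpM2l ?subr_ge0 ?e_le.
lra.
Qed.

(* [b - a = c ^+ 2 / (b + a)] and [b + a <= 3 * maxr a c]. *)
Lemma le_sqrt_increment (h a b c : R) : 0 <= a -> 0 <= c -> 0 <= b ->
  b ^+ 2 = a ^+ 2 + c ^+ 2 -> h <= 2 * c -> h * a <= c ^+ 2 / 2 ->
  h <= 6 * (b - a).
Proof.
move=> a0 c0 b0 bE h_le hc_le.
have [h_le0|h_gt0] := lerP h 0; first by apply: le_trans h_le0 _; nra.
have ab : a <= b by apply: ler_of_sqr => //; nra.
have bac : b <= a + c by apply: ler_of_sqr; nra.
have ba_gt0 : 0 < b + a by nra.
rewrite -(ler_pM2r ba_gt0) -mulrA -subr_sqr bE addrAC subrr add0r.
have [ca|ac] := lerP c a.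
  have : h * (b + a) <= h * (3 * a) by rewrite ler_wpM2l //; lra.
  nra.
have : h * (b + a) <= h * (3 * c) by rewrite ler_wpM2l //; lra.
nra.
Qed.

Lemma optimism_error_le (rk r sq b g p0 p1 : R) :
  0 < rk -> rk <= r -> 0 <= b -> b <= 2 * r -> 0 <= sq -> 0 < g ->
  0 <= p0 -> 0 <= p1 -> p1 ^+ 2 = p0 ^+ 2 + sq ^+ 2 -> p0 <= g ->
  rk * sq * b - g * b ^+ 2 / 2 <= 6 * r ^+ 2 * (p1 - p0).
Proof.
move=> rk_gt0 rk_le b0 b_le sq0 g_gt0 p00 p10 p1E p0_le.
have r2_gt0 : 0 < r ^+ 2 by rewrite exprn_gt0 //; lra.
set E := rk * sq * b - g * b ^+ 2 / 2.
have E_le : E <= 2 * sq * r ^+ 2.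
  have : rk * sq * b <= r * sq * (2 * r) by apply: ler_pM; [nra|lra|nra|lra].
  have : 0 <= g * b ^+ 2 / 2 by rewrite !mulr_ge0 ?sqr_ge0 //; lra.
  rewrite /E; lra.
(* complete the square in b *)
have Eg_le : E * g <= r ^+ 2 * sq ^+ 2 / 2.
  have : 0 <= (g * b - rk * sq) ^+ 2 := sqr_ge0 _.
  have : rk ^+ 2 <= r ^+ 2 by rewrite lerXn2r ?nnegrE //; lra.
  rewrite /E; nra.
suff : E / r ^+ 2 <= 6 * (p1 - p0) by rewrite ler_pdivrMr //; lra.
apply: (le_sqrt_increment p00 sq0 p10 p1E); first by rewrite ler_pdivrMr.
have [E_le0|E_gt0] := lerP E 0.
  have : E / r ^+ 2 <= 0 by rewrite ler_pdivrMr // mul0r.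
  move=> /mulr_le0_ge0 /(_ p00).
  have : 0 <= sq ^+ 2 / 2 by rewrite divr_ge0 ?sqr_ge0.
  lra.
apply: le_trans (_ : E / r ^+ 2 * g <= _).
  by rewrite ler_wpM2l // divr_ge0 ?ltW.
by rewrite mulrAC ler_pdivrMr //; lra.
Qed.

(* Once [p0 >= lam], the stability term [g * a ^+ 2 / 2] pays for the whole
   increment of [p]; before that, [p1 <= p0 + 2 * beta * a] stays below the cap. *)
Lemma optimism_error_le_smooth (rk r sq b g p0 p1 a beta c lam : R) :
  0 < rk -> rk <= r -> 0 <= b -> b <= 2 * r -> 0 <= sq -> 0 < g ->
  0 <= p0 -> 0 <= p1 -> p1 ^+ 2 = p0 ^+ 2 + sq ^+ 2 -> p0 <= g ->
  0 <= a -> a <= 2 * r -> 0 <= beta -> sq <= 2 * beta * a -> 0 <= c -> 0 <= lam ->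
  8 * beta ^+ 2 * (6 * r ^+ 2 + c) <= lam ^+ 2 ->
  rk * sq * b - g * (b ^+ 2 + a ^+ 2) / 2 + c * (p1 - p0) <=
  (6 * r ^+ 2 + c) * (Num.min p1 (lam + 4 * beta * r) - Num.min p0 (lam + 4 * beta * r)).
Proof.
move=> rk_gt0 rk_le b0 b_le sq0 g_gt0 p00 p10 p1E p0_le a0 a_le beta0 sq_le c0 lam0 lam_ge.
set A := 6 * r ^+ 2 + c; set L := lam + 4 * beta * r.
have A0 : 0 <= A by rewrite /A; have := sqr_ge0 r; lra.
have p01 : p0 <= p1 by apply: ler_of_sqr => //; rewrite p1E lerDl sqr_ge0.
have ga0 : 0 <= g * a ^+ 2 / 2 by rewrite !mulr_ge0 ?sqr_ge0 //; lra.
have := optimism_error_le rk_gt0 rk_le b0 b_le sq0 g_gt0 p00 p10 p1E p0_le.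
move=> err_le; apply: le_trans (_ : A * (p1 - p0) - g * a ^+ 2 / 2 <= _).
  by rewrite /A; lra.
have [lam_le|lam_gt] := lerP lam p0; last first.
  have p1_le : p1 <= p0 + sq.
    by apply: ler_of_sqr; [lra | rewrite p1E sqrrD; have := mulr_ge0 p00 sq0; lra].
  have ba_le : beta * a <= beta * (2 * r) by rewrite ler_wpM2l.
  by rewrite /L !min_l; lra.
have min_incr : 0 <= A * (Num.min p1 L - Num.min p0 L).
  by rewrite mulr_ge0 // subr_ge0 le_min !ge_min p01 lexx !orbT.
suff : A * (p1 - p0) <= g * a ^+ 2 / 2 by lra.
have [p10_eq0|p10_gt0] := eqVneq (p1 + p0) 0.
  have -> : p1 - p0 = 0 by lra.
  by rewrite mulr0.
have p10_pos : 0 < p1 + p0 by rewrite lt_def p10_gt0; lra.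
rewrite -(ler_pM2r p10_pos).
have -> : A * (p1 - p0) * (p1 + p0) = A * sq ^+ 2 by rewrite -mulrA -subr_sqr p1E; ring.
have : A * sq ^+ 2 <= A * (2 * beta * a) ^+ 2.
  by apply: ler_wpM2l => //; rewrite lerXn2r ?nnegrE // !mulr_ge0.
have a2 := sqr_ge0 a.
have : 8 * beta ^+ 2 * A * a ^+ 2 <= lam ^+ 2 * a ^+ 2 by rewrite ler_wpM2r.
have : lam ^+ 2 * a ^+ 2 <= p0 ^+ 2 * a ^+ 2 by rewrite ler_wpM2r ?lerXn2r ?nnegrE.
have : p0 ^+ 2 * a ^+ 2 <= g * (p1 + p0) * a ^+ 2.
  by rewrite ler_wpM2r // expr2 ler_pM //; lra.
lra.
Qed.
End ScalarInequalities.

Section EuclideanGeometry.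
Variables (R : realType) (n : nat).
Implicit Types (a b c p q v z : 'rV[R]_n) (l : R).

Lemma dotvC a b : dotv a b = dotv b a.
Proof. by apply: eq_bigr => i _; rewrite mulrC. Qed.

Lemma dotvDl a b c : dotv (a + b) c = dotv a c + dotv b c.
Proof. by rewrite /dotv -big_split; apply: eq_bigr => i _; rewrite mxE mulrDl. Qed.

Lemma dotvDr a b c : dotv c (a + b) = dotv c a + dotv c b.
Proof. by rewrite dotvC dotvDl !(dotvC c). Qed.

Lemma dotvZl l a b : dotv (l *: a) b = l * dotv a b.
Proof. by rewrite /dotv mulr_sumr; apply: eq_bigr => i _; rewrite mxE mulrA. Qed.

Lemma dotvZr l a b : dotv b (l *: a) = l * dotv b a.
Proof. by rewrite dotvC dotvZl dotvC. Qed.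

Lemma dotvNl a b : dotv (- a) b = - dotv a b.
Proof. by rewrite -scaleN1r dotvZl mulN1r. Qed.

Lemma dotvNr a b : dotv b (- a) = - dotv b a.
Proof. by rewrite dotvC dotvNl dotvC. Qed.

Lemma dotvBl a b c : dotv (a - b) c = dotv a c - dotv b c.
Proof. by rewrite dotvDl dotvNl. Qed.

Lemma dotvBr a b c : dotv c (a - b) = dotv c a - dotv c b.
Proof. by rewrite dotvDr dotvNr. Qed.

Lemma dotvvD a b : dotv (a + b) (a + b) = dotv a a + 2 * dotv a b + dotv b b.
Proof. by rewrite !dotvDl !dotvDr (dotvC b a); ring. Qed.

Lemma dotvvBZ a b l :
  dotv (a - l *: b) (a - l *: b) = dotv a a - 2 * l * dotv a b + l ^+ 2 * dotv b b.
Proof. by rewrite !dotvBl !dotvBr !dotvZl !dotvZr (dotvC b a); ring. Qed.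

Lemma dotvv_ge0 a : 0 <= dotv a a.
Proof. by apply: sumr_ge0 => i _; rewrite -expr2 sqr_ge0. Qed.

Lemma enorm_ge0 a : 0 <= enorm a.
Proof. exact: sqrtr_ge0. Qed.

Lemma enorm_sqr a : enorm a ^+ 2 = dotv a a.
Proof. by rewrite sqr_sqrtr // dotvv_ge0. Qed.

Lemma dotv_sqr_le a b : dotv a b ^+ 2 <= dotv a a * dotv b b.
Proof.
have quad l : 0 <= dotv a a - 2 * l * dotv a b + l ^+ 2 * dotv b b.
  by rewrite -dotvvBZ dotvv_ge0.
have [bb0|bb0] := eqVneq (dotv b b) 0.
  (* a linear function of l bounded below must be constant *)
  have [->|ab0] := eqVneq (dotv a b) 0; first by rewrite expr0n /= bb0 mulr0.
  have := quad ((dotv a a + 1) / (2 * dotv a b)).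
  have -> : 2 * ((dotv a a + 1) / (2 * dotv a b)) * dotv a b = dotv a a + 1.
    by field.
  rewrite bb0 mulr0 addr0; lra.
have bb_gt0 : 0 < dotv b b by rewrite lt_def bb0 dotvv_ge0.
have := quad (dotv a b / dotv b b).
have -> : dotv a a - 2 * (dotv a b / dotv b b) * dotv a b
          + (dotv a b / dotv b b) ^+ 2 * dotv b b
        = (dotv a a * dotv b b - dotv a b ^+ 2) / dotv b b by field.
by rewrite pmulr_lge0 ?invr_gt0 // subr_ge0.
Qed.

Lemma dotv_le_enorm a b : dotv a b <= enorm a * enorm b.
Proof.
apply: ler_of_sqr; first by rewrite mulr_ge0 ?enorm_ge0.
by rewrite exprMn !enorm_sqr dotv_sqr_le.
Qed.

Lemma ler_enormD a b : enorm (a + b) <= enorm a + enorm b.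
Proof.
have := enorm_ge0 a; have := enorm_ge0 b; have := dotv_le_enorm a b.
move=> ab b0 a0; apply: ler_of_sqr; first exact: addr_ge0.
by rewrite enorm_sqr dotvvD -!enorm_sqr; nra.
Qed.

Lemma enormN a : enorm (- a) = enorm a.
Proof. by rewrite /enorm dotvNl dotvNr opprK. Qed.

Lemma edistC a b : enorm (a - b) = enorm (b - a).
Proof. by rewrite -enormN opprB. Qed.

Lemma enormZ l a : enorm (l *: a) = `|l| * enorm a.
Proof. by rewrite /enorm dotvZl dotvZr mulrA -expr2 sqrtrM ?sqr_ge0 // sqrtr_sqr. Qed.

Lemma ler_edistD a b c : enorm (a - c) <= enorm (a - b) + enorm (b - c).
Proof. by rewrite -(subrKA b) ler_enormD. Qed.

Variable K : set 'rV[R]_n.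
Hypothesis convK : convex_set K.

Lemma convex_set_seg a b l : K a -> K b -> 0 <= l -> l <= 1 ->
  K (l *: a + (1 - l) *: b).
Proof. by move=> Ka Kb l0 l1; have := @convK a b (Itv01 l0 l1); rewrite !inE => /(_ Ka Kb). Qed.

Lemma convex_set_comb a b l1 l2 : 0 < l1 -> 0 < l2 -> K a -> K b ->
  K ((l1 + l2)^-1 *: (l1 *: a + l2 *: b)).
Proof.
move=> l1_gt0 l2_gt0 Ka Kb.
have l0 : 0 <= l1 / (l1 + l2) by rewrite divr_ge0 //; lra.
have l1' : l1 / (l1 + l2) <= 1 by rewrite ler_pdivrMr ?addr_gt0 //; lra.
have := convex_set_seg Ka Kb l0 l1'.
have -> : 1 - l1 / (l1 + l2) = l2 / (l1 + l2) by field; lra.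
by rewrite scalerDr !scalerA !(mulrC (_^-1)).
Qed.

(* Otherwise a short step from p towards q would get closer to z. *)
Lemma is_proj_obtuse z p q : is_proj K z p -> K q -> dotv (z - p) (q - p) <= 0.
Proof.
move=> [Kp p_min] Kq; rewrite leNgt; apply/negP => c_gt0.
set c := dotv (z - p) (q - p) in c_gt0; set N := dotv (q - p) (q - p).
have N0 : 0 <= N := dotvv_ge0 _.
set l := c / (c + N).
have l_gt0 : 0 < l by rewrite divr_gt0 //; lra.
have l_le1 : l <= 1 by rewrite ler_pdivrMr; lra.
have := p_min _ (convex_set_seg Kq Kp (ltW l_gt0) l_le1).
have -> : z - (l *: q + (1 - l) *: p) = (z - p) - l *: (q - p).
  rewrite scalerBl scale1r scalerBr !opprD !opprK !addrA; congr (_ + _).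
  exact: addrAC.
move=> /(lerXn2r 2); rewrite !nnegrE !enorm_ge0 => /(_ isT isT).
rewrite !enorm_sqr dotvvBZ -/c -/N => h.
have : 2 * c <= l * N by rewrite -(ler_pM2l l_gt0); nra.
by rewrite /l mulrAC ler_pdivlMr; nra.
Qed.

Lemma proj_three_point z v p q l : is_proj K (z - l *: v) p -> K q ->
  2 * (l * dotv v (p - q))
  <= dotv (z - q) (z - q) - dotv (p - q) (p - q) - dotv (z - p) (z - p).
Proof.
move=> proj_p Kq; have := is_proj_obtuse proj_p Kq.
have -> : z - q = (z - p) + (p - q) by rewrite addrA subrK.
rewrite (addrAC z) -[q - p]opprB dotvNr (dotvBl (z - p)) dotvZl dotvvD; lra.
Qed.

Lemma proj_three_point_div z v p q l g : 0 < g -> is_proj K (z - (l / g) *: v) p -> K q ->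
  l * dotv v (p - q)
  <= g * (enorm (z - q) ^+ 2 - enorm (p - q) ^+ 2 - enorm (z - p) ^+ 2) / 2.
Proof.
move=> g_gt0 proj_p Kq; have := proj_three_point proj_p Kq.
rewrite !enorm_sqr => /(ler_wpM2l (ltW g_gt0)).
have -> : g * (2 * (l / g * dotv v (p - q))) = 2 * (l * dotv v (p - q)) by field; rewrite gt_eqF.
lra.
Qed.
End EuclideanGeometry.

Section Trajectory.
Variables (R : realType) (n : nat) (x y : nat -> 'rV[R]_n) (reps : R).
Hypothesis reps_gt0 : 0 < reps.

Local Notation rb := (rbar x y reps).
Local Notation w := (wgt x y reps).
Local Notation xb := (xbar x y reps).
Local Notation zb := (zbar x y reps).

Lemma rbar_ge_eps k : reps <= rb k.
Proof. exact: bigmax_ge_id. Qed.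

Lemma rbar_gt0 k : 0 < rb k.
Proof. exact: lt_le_trans reps_gt0 (rbar_ge_eps k). Qed.

Lemma rbar_le : {homo rb : k m / (k <= m)%N >-> k <= m}.
Proof.
move=> k m km; apply: bigmax_le => [|i _]; first exact: rbar_ge_eps.
exact: (le_bigmax _ _ (widen_ord (km : k.+1 <= m.+1)%N i)).
Qed.

Lemma rbar_ge_y k : enorm (y k - x 0%N) <= rb k.
Proof. by apply: le_trans (le_bigmax _ _ ord_max); rewrite le_max lexx. Qed.

Lemma rbar_ge_x k : enorm (x k - x 0%N) <= rb k.
Proof. by apply: le_trans (le_bigmax _ _ ord_max); rewrite le_max lexx orbT. Qed.

Definition rsum k := \sum_(j < k.+1) rb j.
Definition wsum k := \sum_(j < k.+1) w j.

Lemma rsum_gt0 k : 0 < rsum k.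
Proof.
by rewrite /rsum big_ord_recr ltr_wpDl ?rbar_gt0 ?sumr_ge0 // => i _; rewrite ltW ?rbar_gt0.
Qed.

Lemma wgtE k : w k = rsum k.
Proof. by rewrite /wgt /alpha divfK // gt_eqF ?rbar_gt0. Qed.

Lemma wgt_gt0 k : 0 < w k.
Proof. by rewrite wgtE rsum_gt0. Qed.

Lemma wsum_gt0 k : 0 < wsum k.
Proof.
by rewrite /wsum big_ord_recr ltr_wpDl ?wgt_gt0 ?sumr_ge0 // => i _; rewrite ltW ?wgt_gt0.
Qed.

Lemma rsumS k : rsum k.+1 = rsum k + rb k.+1.
Proof. by rewrite /rsum big_ord_recr. Qed.

Lemma wsumS k : wsum k.+1 = wsum k + w k.+1.
Proof. by rewrite /wsum big_ord_recr. Qed.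

Lemma rsum_sqr_le k : rsum k ^+ 2 <= 2 * rb k * wsum k.
Proof.
elim: k => [|k IH].
  by rewrite /rsum /wsum !big_ord1 wgtE /rsum big_ord1; have := rbar_gt0 0; nra.
rewrite rsumS wsumS wgtE rsumS.
have := rbar_le (leqnSn k); have := rbar_gt0 k; have := wsum_gt0 k; have := rsum_gt0 k.
nra.
Qed.

Lemma scale_wsum_xbar k : wsum k *: xb k = \sum_(j < k.+1) w j *: x j.+1.
Proof. by rewrite /xbar scalerA divff ?scale1r // gt_eqF ?wsum_gt0. Qed.

Lemma scale_wsum_zbar k : wsum k.+1 *: zb k.+1 = w k.+1 *: y k.+1 + wsum k *: xb k.
Proof. by rewrite /zbar scalerA divff ?scale1r ?gt_eqF ?wsum_gt0 // scale_wsum_xbar. Qed.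

Lemma xbar0 : xb 0 = x 1%N.
Proof. by rewrite /xbar !big_ord1 scalerA mulVf ?scale1r // gt_eqF ?wgt_gt0. Qed.

Lemma zbar0 : zb 0 = y 0%N.
Proof. by rewrite /zbar big_ord0 addr0 big_ord1 scalerA mulVf ?scale1r // gt_eqF ?wgt_gt0. Qed.

Lemma xbar_sub_zbar k : xb k - zb k = (w k / wsum k) *: (x k.+1 - y k).
Proof.
have wsum_neq0 : wsum k != 0 by rewrite gt_eqF ?wsum_gt0.
apply: (@scalerI _ _ (wsum k)) => //.
rewrite scalerBr scale_wsum_xbar /zbar scalerA divff // scale1r scalerA mulrCA divff // mulr1.
by rewrite big_ord_recr /= scalerBr (addrC (w k *: y k)) opprD addrACA subrr add0r.
Qed.

Lemma alpha_ge0 k : 0 <= alpha x y reps k.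
Proof. by rewrite divr_ge0 ?sumr_ge0 // => [i _|]; rewrite ltW ?rbar_gt0. Qed.

Lemma alpha_wgt_le k : alpha x y reps k * w k <= 2 * wsum k.
Proof.
have := rsum_sqr_le k; have rb_gt0 := rbar_gt0 k.
by rewrite /alpha -/(rsum k) wgtE => sqr_le; rewrite mulrAC ler_pdivrMr //; nra.
Qed.

Variables (K : set 'rV[R]_n) (f : 'rV[R]_n -> R) (grad : 'rV[R]_n -> 'rV[R]_n).
Variables (Gx Gy : nat -> R) (u : 'rV[R]_n).
Hypotheses (convK : convex_set K) (subgrad : is_subgrad_on K f grad) (Ku : K u).
Hypotheses (Kx0 : K (x 0%N)) (y0 : y 0%N = x 0%N).
Hypothesis Gxy_incr : forall t, 0 < Gx t /\ Gx t <= Gy t /\ Gy t <= Gx t.+1.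
Hypothesis proj_x : forall t, is_proj K
  (y t - (alpha x y reps t * (rb t / Num.sqrt (Gx t))) *: grad (zb t)) (x t.+1).
Hypothesis proj_y : forall t, is_proj K
  (y t - (alpha x y reps t * (rb t / Num.sqrt (Gy t))) *: grad (xb t)) (y t.+1).

Lemma x_in k : K (x k).
Proof. by case: k => [|k] //; case: (proj_x k). Qed.

Lemma y_in k : K (y k).
Proof. by case: k => [|k]; [rewrite y0 | case: (proj_y k)]. Qed.

Lemma xbar_in k : K (xb k).
Proof.
elim: k => [|k IH]; first by rewrite xbar0; apply: x_in.
have -> : xb k.+1 = (wsum k + w k.+1)^-1 *: (wsum k *: xb k + w k.+1 *: x k.+2).
  by rewrite -wsumS scale_wsum_xbar /xbar; congr (_ *: _); rewrite big_ord_recr.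
by apply: (convex_set_comb convK); rewrite ?wsum_gt0 ?wgt_gt0 //; apply: x_in.
Qed.

Lemma zbar_in k : K (zb k).
Proof.
case: k => [|k]; first by rewrite zbar0; apply: y_in.
have -> : zb k.+1 = (w k.+1 + wsum k)^-1 *: (w k.+1 *: y k.+1 + wsum k *: xb k).
  by rewrite addrC -wsumS -scale_wsum_zbar scalerA mulVf ?scale1r // gt_eqF ?wsum_gt0.
by apply: (convex_set_comb convK); rewrite ?wsum_gt0 ?wgt_gt0 //; [apply: y_in | apply: xbar_in].
Qed.

Definition regret t := \sum_(k < t.+1) w k * dotv (grad (xb k)) (x k.+1 - u).

Lemma online_to_batch t : wsum t * (f (xb t) - f u) <= regret t.
Proof.
elim: t => [|t IH].
  rewrite /regret /wsum !big_ord1 xbar0 /=; apply: ler_wpM2l; first exact: ltW (wgt_gt0 0).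
  by have := subgrad (x_in 1) Ku; rewrite !dotvBr; lra.
rewrite /regret big_ord_recr /= -/(regret t) wsumS.
set g := grad (xb t.+1).
have := subgrad (xbar_in t.+1) (xbar_in t); have := subgrad (xbar_in t.+1) Ku.
rewrite -/g !dotvBr => sub_u sub_prev.
have avg : (wsum t + w t.+1) * dotv g (xb t.+1)
         = wsum t * dotv g (xb t) + w t.+1 * dotv g (x t.+2).
  by rewrite -!dotvZr -dotvDr -wsumS !scale_wsum_xbar [in LHS]big_ord_recr.
have := wsum_gt0 t; have := wgt_gt0 t.+1.
nra.
Qed.

Definition gamx k := Num.sqrt (Gx k).
Definition gamy k := Num.sqrt (Gy k).
Definition dist k := enorm (y k - u).
Definition dist0 := enorm (x 0%N - u).
Definition dx k := enorm (x k.+1 - y k).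
Definition dxy k := enorm (x k.+1 - y k.+1).
Definition sqrtq k := alpha x y reps k * enorm (grad (xb k) - grad (zb k)).
Definition err k := rb k * sqrtq k * dxy k - gamx k * (dxy k ^+ 2 + dx k ^+ 2) / 2.

Lemma gamx_gt0 k : 0 < gamx k.
Proof. by rewrite sqrtr_gt0; case: (Gxy_incr k). Qed.

Lemma gamx_le_gamy k : gamx k <= gamy k.
Proof. by rewrite ler_sqrt; case: (Gxy_incr k) => Gx_gt0 [Gxy _]; lra. Qed.

Lemma gamy_le_gamyS k : gamy k <= gamy k.+1.
Proof.
rewrite ler_sqrt; case: (Gxy_incr k) => _ [_ GyGx]; case: (Gxy_incr k.+1) => Gx_gt0 [Gxy _].
all: lra.
Qed.

Lemma sqrtq_ge0 k : 0 <= sqrtq k.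
Proof. by rewrite mulr_ge0 ?alpha_ge0 ?enorm_ge0. Qed.

Lemma regret_step k : w k * dotv (grad (xb k)) (x k.+1 - u)
  <= gamy k * (dist k ^+ 2 - dist k.+1 ^+ 2) / 2 + err k.
Proof.
have gx_gt0 := gamx_gt0 k; have gxy := gamx_le_gamy k.
have gy_gt0 : 0 < gamy k by apply: lt_le_trans gxy.
have px := proj_x k; rewrite mulrA -/(w k) -/(gamx k) in px.
have py := proj_y k; rewrite mulrA -/(w k) -/(gamy k) in py.
(* test the x-step against y_{k+1} and the y-step against u *)
have step_x := proj_three_point_div convK gx_gt0 px (y_in k.+1).
have step_y := proj_three_point_div convK gy_gt0 py Ku.
rewrite -/(dxy k) (edistC (y k) (x k.+1)) -/(dx k) in step_x.
rewrite -/(dist k) -/(dist k.+1) in step_y.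
set g := grad (xb k) in step_y *; set m := grad (zb k) in step_x *.
have err_cs : w k * dotv (g - m) (x k.+1 - y k.+1) <= rb k * sqrtq k * dxy k.
  have -> : rb k * sqrtq k * dxy k = w k * (enorm (g - m) * dxy k).
    by rewrite /sqrtq /wgt -/g -/m; ring.
  by rewrite /dxy ler_wpM2l ?dotv_le_enorm // ltW ?wgt_gt0.
have dec : w k * dotv g (x k.+1 - u) = w k * dotv g (y k.+1 - u)
    + w k * dotv m (x k.+1 - y k.+1) + w k * dotv (g - m) (x k.+1 - y k.+1).
  by rewrite !dotvBl !dotvBr; ring.
have := ler_wpM2r (sqr_ge0 (enorm (y k - y k.+1))) gxy.
by rewrite /err; lra.
Qed.

Lemma dx_le k t : (k <= t)%N -> dx k <= 2 * rb t.+1.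
Proof.
move=> kt; have := ler_edistD (x k.+1) (x 0%N) (y k).
rewrite (edistC (x 0%N)) -/(dx k).
have := rbar_ge_x k.+1; have := rbar_ge_y k.
have := rbar_le (kt : k.+1 <= t.+1)%N; have := rbar_le (leqW kt : k <= t.+1)%N.
lra.
Qed.

Lemma dxy_le k t : (k <= t)%N -> dxy k <= 2 * rb t.+1.
Proof.
move=> kt; have := ler_edistD (x k.+1) (x 0%N) (y k.+1).
rewrite (edistC (x 0%N)) -/(dxy k).
have := rbar_ge_x k.+1; have := rbar_ge_y k.+1; have := rbar_le (kt : k.+1 <= t.+1)%N.
lra.
Qed.

Lemma dist_le k t : (k <= t.+1)%N -> dist k <= rb t.+1 + dist0.
Proof.
move=> kt; have := ler_edistD (y k) (x 0%N) u.
have := rbar_ge_y k; have := rbar_le kt; rewrite /dist /dist0; lra.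
Qed.

Lemma dist_sqr_le k t : (k <= t.+1)%N ->
  dist k ^+ 2 <= dist t.+1 ^+ 2 + 4 * rb t.+1 * (rb t.+1 + dist0).
Proof.
move=> kt; have r_gt0 := rbar_gt0 t.+1.
have close : dist k <= dist t.+1 + 2 * rb t.+1.
  have := ler_edistD (y k) (y t.+1) u; have := ler_edistD (y k) (x 0%N) (y t.+1).
  rewrite (edistC (x 0%N)) -/(dist k) -/(dist t.+1).
  have := rbar_ge_y k; have := rbar_ge_y t.+1; have := rbar_le kt; lra.
have := dist_le kt; have := dist_le (leqnn t.+1).
have := enorm_ge0 (y k - u); have := enorm_ge0 (y t.+1 - u); rewrite -!/(dist _).
nra.
Qed.

Lemma sum_dist_telescope_le t :
  \sum_(k < t.+1) gamy k * (dist k ^+ 2 - dist k.+1 ^+ 2) / 2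
  <= 2 * gamy t * rb t.+1 * (rb t.+1 + dist0).
Proof.
have := abel_telescope_le gamy_le_gamyS (fun k => sqrtr_ge0 _) (fun k => dist_sqr_le (t:=t)).
by rewrite -mulr_suml; lra.
Qed.

Local Notation Q := (Qpre x y reps grad).

Lemma QpreS k : Q k.+1 = Q k + sqrtq k ^+ 2.
Proof. by rewrite /Qpre big_ord_recr /= /qq /sqrtq [in RHS]exprMn. Qed.

Lemma Qpre_ge0 k : 0 <= Q k.
Proof. by apply: sumr_ge0 => i _; rewrite mulr_ge0 ?sqr_ge0. Qed.

Definition rootQ k := Num.sqrt (Q k).

Lemma rootQ0 : rootQ 0 = 0.
Proof. by rewrite /rootQ /Qpre big_ord0 sqrtr0. Qed.

Lemma rootQ_ge0 k : 0 <= rootQ k.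
Proof. exact: sqrtr_ge0. Qed.

Lemma rootQ_sqrS k : rootQ k.+1 ^+ 2 = rootQ k ^+ 2 + sqrtq k ^+ 2.
Proof. by rewrite !sqr_sqrtr ?Qpre_ge0 // QpreS. Qed.

Lemma sqrtq_le_smooth beta k : smooth_on K grad beta -> 0 <= beta ->
  sqrtq k <= 2 * beta * dx k.
Proof.
move=> smooth beta0; have := smooth _ _ (xbar_in k) (zbar_in k).
have wk_ge0 : 0 <= w k / wsum k by rewrite divr_ge0 // ltW ?wgt_gt0 ?wsum_gt0.
rewrite xbar_sub_zbar enormZ ger0_norm // -/(dx k).
move=> /(ler_wpM2l (alpha_ge0 k)); rewrite -/(sqrtq k) => /le_trans; apply.
have aw : alpha x y reps k * w k / wsum k <= 2.
  by rewrite ler_pdivrMr ?wsum_gt0 ?alpha_wgt_le.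
have bd : 0 <= beta * dx k by rewrite mulr_ge0 ?enorm_ge0.
have -> : alpha x y reps k * (beta * (w k / wsum k * dx k))
        = beta * dx k * (alpha x y reps k * w k / wsum k) by ring.
by have := ler_wpM2l bd aw; lra.
Qed.

Hypothesis Q_le_Gx : forall t, Q t <= Gx t.

Lemma rootQ_le_gamx k : rootQ k <= gamx k.
Proof. by rewrite ler_sqrt ?Q_le_Gx //; case: (Gxy_incr k) => /ltW. Qed.

Lemma sum_err_le t : \sum_(k < t.+1) err k <= 6 * rb t.+1 ^+ 2 * rootQ t.+1.
Proof.
have -> : 6 * rb t.+1 ^+ 2 * rootQ t.+1
        = \sum_(k < t.+1) 6 * rb t.+1 ^+ 2 * (rootQ k.+1 - rootQ k).
  by rewrite -mulr_sumr telescope_sumr_ord rootQ0 subr0.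
apply: ler_sum => -[k /= kt] _; rewrite ltnS in kt.
apply: le_trans (optimism_error_le (rbar_gt0 k) (rbar_le (leqW kt)) (enorm_ge0 _)
  (dxy_le kt) (sqrtq_ge0 k) (gamx_gt0 k) (rootQ_ge0 k) (rootQ_ge0 k.+1)
  (rootQ_sqrS k) (rootQ_le_gamx k)).
have := mulr_ge0 (ltW (gamx_gt0 k)) (sqr_ge0 (dx k)).
by rewrite /err /dxy; lra.
Qed.

Lemma sum_err_le_smooth t beta c lam : smooth_on K grad beta -> 0 <= beta ->
  0 <= c -> 0 <= lam -> 8 * beta ^+ 2 * (6 * rb t.+1 ^+ 2 + c) <= lam ^+ 2 ->
  \sum_(k < t.+1) err k + c * rootQ t.+1
  <= (6 * rb t.+1 ^+ 2 + c) * (lam + 4 * beta * rb t.+1).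
Proof.
move=> smooth beta0 c0 lam0 lam_ge.
set L := lam + 4 * beta * rb t.+1.
have L0 : 0 <= L by rewrite /L addr_ge0 // !mulr_ge0 // ltW ?rbar_gt0.
apply: le_trans
  (_ : (6 * rb t.+1 ^+ 2 + c) * (Num.min (rootQ t.+1) L - Num.min (rootQ 0) L) <= _).
  rewrite -(telescope_sumr_ord (fun k => Num.min (rootQ k) L)) mulr_sumr.
  have -> : c * rootQ t.+1 = \sum_(k < t.+1) c * (rootQ k.+1 - rootQ k).
    by rewrite -mulr_sumr telescope_sumr_ord rootQ0 subr0.
  rewrite -big_split /=.
  apply: ler_sum => -[k /= kt] _; rewrite ltnS in kt.
  exact: (optimism_error_le_smooth (rbar_gt0 k) (rbar_le (leqW kt)) (enorm_ge0 _)
    (dxy_le kt) (sqrtq_ge0 k) (gamx_gt0 k) (rootQ_ge0 k) (rootQ_ge0 k.+1)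
    (rootQ_sqrS k) (rootQ_le_gamx k) (enorm_ge0 _) (dx_le kt) beta0
    (sqrtq_le_smooth k smooth beta0) c0 lam0 lam_ge).
rewrite rootQ0 (min_l L0) subr0 ler_wpM2l ?ge_min ?lexx ?orbT //.
by have := sqr_ge0 (rb t.+1); lra.
Qed.

Lemma regret_le t :
  regret t <= 2 * gamy t * rb t.+1 * (rb t.+1 + dist0) + \sum_(k < t.+1) err k.
Proof.
apply: le_trans (_ : \sum_(k < t.+1)
  (gamy k * (dist k ^+ 2 - dist k.+1 ^+ 2) / 2 + err k) <= _).
  by apply: ler_sum => k _; apply: regret_step.
by rewrite big_split lerD2r sum_dist_telescope_le.
Qed.

Lemma regret_le_nonsmooth t (M : R) : gamy t <= M -> rootQ t.+1 <= M ->
  regret t <= 8 * rb t.+1 * (rb t.+1 + dist0) * M.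
Proof.
move=> gamy_le rootQ_le.
have r_gt0 := rbar_gt0 t.+1; have d0 : 0 <= dist0 := enorm_ge0 _.
have rD0 : 0 <= rb t.+1 * (rb t.+1 + dist0) by rewrite mulr_ge0 //; lra.
have := regret_le t; have := sum_err_le t.
have := ler_wpM2r rD0 gamy_le.
have : rb t.+1 ^+ 2 * rootQ t.+1 <= rb t.+1 * (rb t.+1 + dist0) * M.
  by rewrite expr2 ler_pM ?mulr_ge0 ?rootQ_ge0 ?ler_pM2l //; lra.
lra.
Qed.

Lemma regret_le_smooth t s beta : smooth_on K grad beta -> 0 <= beta -> 1 / 2 <= s ->
  gamy t <= 2 * s * rootQ t.+1 ->
  regret t <= 320 * rb t.+1 * (s * Num.sqrt s * beta * (rb t.+1 + dist0) ^+ 2).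
Proof.
move=> smooth beta0 s_ge gamy_le.
set r := rb t.+1; set D := r + dist0; set sg := Num.sqrt s.
have r_gt0 : 0 < r := rbar_gt0 t.+1.
have rD : r <= D by rewrite /D lerDl enorm_ge0.
have sg2 : sg ^+ 2 = s by rewrite sqr_sqrtr //; lra.
have sg_ge : 1 / 2 <= sg by apply: ler_of_sqr; [exact: sqrtr_ge0 | rewrite sg2; lra].
have rD0 : 0 <= r * D by rewrite mulr_ge0 //; lra.
have A_le : 6 * r ^+ 2 + 4 * s * r * D <= 16 * s * (r * D).
  have := ler_wpM2l (ltW r_gt0) rD; have : 1 <= 2 * s by lra.
  by move=> /(ler_wpM2r rD0); rewrite -expr2; lra.
have lam_ge : 8 * beta ^+ 2 * (6 * r ^+ 2 + 4 * s * r * D) <= (12 * beta * sg * D) ^+ 2.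
  have : r * D <= D ^+ 2 by rewrite expr2 ler_wpM2r //; lra.
  have s_ge0 : 0 <= 16 * s by lra.
  move=> /(ler_wpM2l s_ge0)/(le_trans A_le)/(ler_wpM2l (sqr_ge0 beta)).
  have : 0 <= beta ^+ 2 * (s * D ^+ 2) by rewrite !mulr_ge0 ?sqr_ge0 //; lra.
  rewrite !exprMn sg2; lra.
have c0 : 0 <= 4 * s * r * D by rewrite -mulrA mulr_ge0 //; lra.
have lam0 : 0 <= 12 * beta * sg * D by rewrite !mulr_ge0 ?sqrtr_ge0 //; lra.
have err_le := sum_err_le_smooth smooth beta0 c0 lam0 lam_ge.
have cap_le : 12 * beta * sg * D + 4 * beta * r <= 20 * beta * sg * D by nra.
have : 2 * gamy t * (r * D) <= 4 * s * r * D * rootQ t.+1.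
  by have := ler_wpM2r rD0 gamy_le; lra.
have : (6 * r ^+ 2 + 4 * s * r * D) * (12 * beta * sg * D + 4 * beta * r)
       <= 16 * s * (r * D) * (20 * beta * sg * D).
  by rewrite ler_pM // ?addr_ge0 ?mulr_ge0 ?sqr_ge0 //; nra.
have := regret_le t; rewrite -/r -/D in err_le *; lra.
Qed.

Definition bound_num t s beta :=
  s * Num.sqrt s * beta * (rb t.+1 + dist0) ^+ 2
  + (rb t.+1 + dist0) * Num.max 0 (Num.sqrt (Num.max (Gy t) (Q t.+1)) - s * Num.sqrt (Q t.+1)).

Lemma regret_le_rate t s beta : 0 <= s -> (s = 0 \/ smooth_on K grad beta) -> 0 <= beta ->
  regret t <= 320 * rb t.+1 * bound_num t s beta.
Proof.
move=> s0 smooth_or beta0; rewrite /bound_num -/(rootQ t.+1).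
set D := rb t.+1 + dist0.
set M := Num.sqrt (Num.max (Gy t) (Q t.+1)).
have r_gt0 := rbar_gt0 t.+1; have D0 : 0 <= D by rewrite addr_ge0 ?enorm_ge0 ?ltW.
have M0 : 0 <= M := sqrtr_ge0 _.
have max0 : 0 <= Num.max (Gy t) (Q t.+1) by rewrite le_max Qpre_ge0 orbT.
have gamy_le : gamy t <= M by rewrite ler_sqrt // le_max lexx.
have rootQ_le : rootQ t.+1 <= M by rewrite ler_sqrt // le_max lexx orbT.
have X1_ge0 : 0 <= s * Num.sqrt s * beta * D ^+ 2.
  by rewrite !mulr_ge0 ?sqrtr_ge0 ?sqr_ge0.
have X2_ge0 : 0 <= D * Num.max 0 (M - s * rootQ t.+1) by rewrite mulr_ge0 ?le_max ?lexx.
(* below the threshold the bound needs no smoothness; above it [s > 1/2], so [s <> 0] *)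
have [small|large] := lerP (2 * s * rootQ t.+1) M.
  have half_le : M / 2 <= Num.max 0 (M - s * rootQ t.+1) by rewrite le_max; lra.
  have := regret_le_nonsmooth gamy_le rootQ_le; rewrite -/D.
  have := ler_wpM2l (mulr_ge0 (ltW r_gt0) D0) half_le.
  have := mulr_ge0 (ltW r_gt0) X1_ge0; have := mulr_ge0 (ltW r_gt0) X2_ge0.
  lra.
have s_gt : 1 / 2 <= s.
  have rootQ_gt0 : 0 < rootQ t.+1 by have := rootQ_ge0 t.+1; nra.
  by rewrite ler_pdivrMr //; nra.
have smooth : smooth_on K grad beta by case: smooth_or => // s_eq0; move: s_gt; rewrite s_eq0; lra.
have := regret_le_smooth smooth beta0 s_gt (le_trans gamy_le (ltW large)).
have := mulr_ge0 (ltW r_gt0) X2_ge0; rewrite -/D; lra.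
Qed.

Lemma suboptimality_le t s beta : 0 <= s -> (s = 0 \/ smooth_on K grad beta) -> 0 <= beta ->
  f (xb t) - f u <= 640 * bound_num t s beta / (rsum t / rb t.+1) ^+ 2.
Proof.
move=> s0 smooth_or beta0; have := regret_le_rate t s0 smooth_or beta0.
have := online_to_batch t.
set F := f (xb t) - f u; set X := bound_num t s beta; set r := rb t.+1 => F_le regret_le.
have r_gt0 : 0 < r := rbar_gt0 t.+1.
have S_gt0 := rsum_gt0 t; have W_gt0 := wsum_gt0 t.
have X_ge0 : 0 <= X.
  have D0 : 0 <= r + dist0 by rewrite addr_ge0 ?enorm_ge0 ?ltW.
  by rewrite addr_ge0 ?mulr_ge0 ?sqrtr_ge0 ?sqr_ge0 ?le_max ?lexx.
have S2_le : rsum t ^+ 2 <= 2 * r * wsum t.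
  apply: le_trans (rsum_sqr_le t) (ler_wpM2r (ltW W_gt0) _).
  by have := rbar_le (leqnSn t); rewrite -/r; lra.
have -> : 640 * X / (rsum t / r) ^+ 2 = 640 * X * r ^+ 2 / rsum t ^+ 2.
  by rewrite expr_div_n; field; rewrite !gt_eqF.
rewrite ler_pdivlMr ?exprn_gt0 //.
have Xr2 : 0 <= X * r ^+ 2 by rewrite mulr_ge0 ?sqr_ge0.
have [F_le0|F_gt0] := lerP F 0.
  by have := mulr_le0_ge0 F_le0 (sqr_ge0 (rsum t)); lra.
have := ler_wpM2l (ltW F_gt0) S2_le.
have := ler_wpM2l (mulr_ge0 (ler0n _ 2) (ltW r_gt0)) (le_trans F_le regret_le).
lra.
Qed.
End Trajectory.

Theorem proposition3 :
  exists C : rat, 0 < C /\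
  forall (R : realType) (n : nat) (K : set 'rV[R]_n)
    (f : 'rV[R]_n -> R) (grad : 'rV[R]_n -> 'rV[R]_n) (beta : R)
    (xstar : 'rV[R]_n) (reps : R)
    (x y : nat -> 'rV[R]_n) (Gx Gy : nat -> R),
    closed K -> convex_set K ->
    convex_on K f -> is_subgrad_on K f grad -> 0 <= beta ->
    is_minimizer K f xstar ->
    0 < reps ->
    K (x 0%N) -> y 0%N = x 0%N ->
    (forall t, 0 < Gx t /\ Gx t <= Gy t /\ Gy t <= Gx t.+1) ->
    (forall t, is_proj K
       (y t - (alpha x y reps t * (rbar x y reps t / Num.sqrt (Gx t)))
                *: grad (zbar x y reps t))
       (x t.+1)) ->
    (forall t, is_proj K
       (y t - (alpha x y reps t * (rbar x y reps t / Num.sqrt (Gy t)))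
                *: grad (xbar x y reps t))
       (y t.+1)) ->
    (forall t, Qpre x y reps grad t <= Gx t) ->
    forall (t : nat) (s : R), 0 <= s ->
    (s = 0 \/ smooth_on K grad beta) ->
    let D := rbar x y reps t.+1 + enorm (x 0%N - xstar) in
    let Qt := Qpre x y reps grad t.+1 in
    f (xbar x y reps t) - f xstar <=
      ratr C *
      (s * Num.sqrt s * beta * D ^+ 2
       + D * Num.max 0 (Num.sqrt (Num.max (Gy t) Qt) - s * Num.sqrt Qt))
      / ((\sum_(k < t.+1) rbar x y reps k) / rbar x y reps t.+1) ^+ 2.
Proof.
exists 640%:R; split; first by rewrite ltr0n.
(* [closed K] only guarantees that the projections exist, and the convexity of [f]
   is implied by the subgradient inequality. *)
move=> R n K f grad beta xstar reps x y Gx Gy _ convK _ subgrad beta0 [Kxstar _] reps_gt0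
  Kx0 y0 Gxy_incr proj_x proj_y Q_le t s s0 smooth_or /=.
rewrite ratr_nat.
exact: (suboptimality_le reps_gt0 convK subgrad Kxstar Kx0 y0 Gxy_incr proj_x proj_y Q_le
  t s0 smooth_or beta0).
Qed.
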